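(* Let $M$ and $M'$ be matroids on ground sets $E,E'$ with $E\cap E'=\{p\}$, where $p$ is a coloop of neither $M$ nor $M'$. Then $f(\operatorname{Ser}(M,M'))\le f(M)+f(M')$. Moreover, if $M$ has two disjoint bases neither of which contains $p$, then $f(\operatorname{Ser}(M,M'))\le\min\bigl(f(M),f(M')\bigr)$.
   Context: The series connection $\operatorname{Ser}(M,M')$ is the matroid on $E\cup E'$ whose bases are the sets $B\cup B'$ with $B$ a basis of $M$, $B'$ a basis of $M'$, and $B\cap B'=\varnothing$. For a matroid $M$, $\mathcal{B}(M)$ denotes its set of bases, and the distance between two bases $B,B'$ is $|B\triangle B'|$; $\operatorname{diam}$ denotes diameter. The Borsuk number $f(M)$ is the minimum number of parts in a partition of $\mathcal{B}(M)$ in which every part has diameter strictly smaller than $\operatorname{diam}(\mathcal{B}(M))$; if $M$ has exactly one basis, $f(M):=+\infty$. *)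

From mathcomp Require Import all_boot.
Set Implicit Arguments. Unset Strict Implicit. Unset Printing Implicit Defensive.

Section Matroids.
Variable T : finType.

Definition is_matroid (E : {set T}) (BM : {set {set T}}) : bool :=
  [&& BM != set0,
      [forall B in BM, B \subset E] &
      [forall B1 in BM, forall B2 in BM, forall x in B1 :\: B2,
         exists y in B2 :\: B1, (y |: (B1 :\ x)) \in BM]].

Definition coloop (BM : {set {set T}}) (p : T) : bool := [forall B in BM, p \in B].

Definition Ser_bases (BM BM' : {set {set T}}) : {set {set T}} :=
  [set X | [exists B in BM, exists B' in BM',
              [disjoint B & B'] && (X == B :|: B')]].

Definition symdiff (A B : {set T}) : {set T} := (A :\: B) :|: (B :\: A).
Definition dist (A B : {set T}) : nat := #|symdiff A B|.

(* diameter of a family of sets (0 for the empty family) *)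
Definition diam (F : {set {set T}}) : nat :=
  \max_(B1 in F) \max_(B2 in F) dist B1 B2.

Definition borsuk_partition (BM : {set {set T}}) (P : {set {set {set T}}}) : bool :=
  partition P BM && [forall A in P, diam A < diam BM].

(* Borsuk number, with None standing for +oo (no such partition, e.g.
   when there is exactly one basis). *)
Definition borsuk (BM : {set {set T}}) : option nat :=
  if [exists P, borsuk_partition BM P]
  then Some (\big[minn/#|BM|]_(P | borsuk_partition BM P) #|P|)
  else None.

End Matroids.

(* extended naturals: None = +oo *)
Definition ole (a b : option nat) : bool :=
  match a, b with
  | _, None => true
  | None, Some _ => false
  | Some x, Some y => x <= y
  end.

Definition oadd (a b : option nat) : option nat :=
  match a, b with Some x, Some y => Some (x + y) | _, _ => None end.

Definition omin (a b : option nat) : option nat :=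
  match a, b with
  | None, b => b
  | a, None => a
  | Some x, Some y => Some (minn x y)
  end.

From mathcomp Require Import all_boot.
Set Implicit Arguments. Unset Strict Implicit. Unset Printing Implicit Defensive.

(* For two such bases, dist (B :|: B') (C :|: C') is at most
   dist B C + dist B' C', with equality when p lies in none of B, C (then the
   two pieces live on disjoint parts of E :|: E').  Given Borsuk partitions P
   of M and P' of M', label the basis B :|: B' by the block of B' in P' when
   p \in B' (so that p avoids B), and by the block of B in P otherwise: two
   bases with the same label are closer than diam (Ser M M'), which gives at
   most #|P| + #|P'| parts.  If M has disjoint bases B1, B2 avoiding p, then,
   all bases having the same size, diam M = dist B1 B2 is attained away from
   p, and labelling by the block of B alone (resp. of B' alone) already
   works. *)

Section SetDistance.
Variable T : finType.
Implicit Types (A B C X Y : {set T}) (F : {set {set T}}).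

Lemma cards_disjointU A B : [disjoint A & B] -> #|A :|: B| = #|A| + #|B|.
Proof. by move=> dAB; have /leqifP := leq_card_setU A B; rewrite dAB => /eqP. Qed.

Lemma dist_disjoint B C : [disjoint B & C] -> dist B C = #|B| + #|C|.
Proof.
move=> dBC; rewrite -cards_disjointU // /dist; apply: eq_card => x.
move/pred0P: dBC => /(_ x) /=; rewrite /symdiff !inE.
by case: (x \in B); case: (x \in C).
Qed.

Lemma symdiff_sub B C : symdiff B C \subset B :|: C.
Proof.
by apply/subsetP => x; rewrite /symdiff !inE; case: (x \in B); case: (x \in C).
Qed.

Lemma dist_le_card B C : dist B C <= #|B| + #|C|.
Proof. exact: leq_trans (subset_leq_card (symdiff_sub B C)) (leq_card_setU B C). Qed.

Lemma dist_setU_le B B' C C' : dist (B :|: B') (C :|: C') <= dist B C + dist B' C'.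
Proof.
apply: leq_trans (leq_card_setU _ _); apply: subset_leq_card.
apply/subsetP => x; rewrite /symdiff !inE.
by case: (x \in B); case: (x \in B'); case: (x \in C); case: (x \in C').
Qed.

Lemma dist_setU_disjoint B B' C C' : [disjoint B :|: C & B' :|: C'] ->
  dist (B :|: B') (C :|: C') = dist B C + dist B' C'.
Proof.
move=> dis; rewrite /dist -cards_disjointU; last first.
  exact: disjointWl (symdiff_sub B C) (disjointWr (symdiff_sub B' C') dis).
apply: eq_card => x; move/pred0P: dis => /(_ x) /=; rewrite /symdiff !inE.
by case: (x \in B); case: (x \in B'); case: (x \in C); case: (x \in C').
Qed.

Lemma dist_le_diam F X Y : X \in F -> Y \in F -> dist X Y <= diam F.
Proof.
move=> XF YF; apply: leq_trans (leq_bigmax_cond _ XF).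
exact: (@leq_bigmax_cond _ (mem F) (dist X) Y YF).
Qed.

Lemma diam_lt F n : 0 < n -> (forall X Y, X \in F -> Y \in F -> dist X Y < n) ->
  diam F < n.
Proof.
move=> n_gt0 lt_n; rewrite -(prednK n_gt0) ltnS.
apply/bigmax_leqP => X XF; apply/bigmax_leqP => Y YF.
by rewrite -ltnS prednK // lt_n.
Qed.

Lemma addn_diam_le F n m : F != set0 ->
  (forall X Y, X \in F -> Y \in F -> n + dist X Y <= m) -> n + diam F <= m.
Proof.
move=> /set0Pn [X0 X0F] le_m.
have le_nm : n <= m := leq_trans (leq_addr _ _) (le_m _ _ X0F X0F).
rewrite -leq_subRL //; apply/bigmax_leqP => X XF; apply/bigmax_leqP => Y YF.
by rewrite leq_subRL // le_m.
Qed.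

End SetDistance.

Section BorsukNumber.
Variable T : finType.
Implicit Types (X Y : {set T}) (F : {set {set T}}) (P : {set {set {set T}}}).

Lemma borsuk_partition_pblock F P X : borsuk_partition F P -> X \in F ->
  pblock P X \in P.
Proof.
by case/andP=> partP _ XF; apply: pblock_mem; rewrite (cover_partition partP).
Qed.

Lemma borsuk_partition_dist F P X Y : borsuk_partition F P -> X \in F -> Y \in F ->
  pblock P X = pblock P Y -> dist X Y < diam F.
Proof.
move=> bP XF YF eXY; have XP := borsuk_partition_pblock bP XF.
case/andP: bP => partP /forall_inP /(_ _ XP); apply: leq_ltn_trans.
have inP Z : Z \in F -> Z \in pblock P Z.
  by move=> ZF; rewrite mem_pblock (cover_partition partP).
by apply: dist_le_diam; [|rewrite eXY]; apply: inP.
Qed.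

Lemma bigmin_leq (I : finType) (Pr : pred I) (G : I -> nat) x j :
  Pr j -> \big[minn/x]_(i | Pr i) G i <= G j.
Proof.
move=> Pj; have : j \in index_enum I by rewrite mem_index_enum.
elim: (index_enum I) => // a r IH; rewrite inE big_cons => /orP [/eqP <-|jr].
  by rewrite Pj geq_minl.
by case: (Pr a); rewrite /= ?geq_min IH ?orbT.
Qed.

Lemma ole_trans_Some a m n : ole a (Some m) -> m <= n -> ole a (Some n).
Proof. by case: a => //= k; apply: leq_trans. Qed.

Lemma borsuk_le_partition F P : borsuk_partition F P -> ole (borsuk F) (Some #|P|).
Proof.
move=> bP; rewrite /borsuk; case: existsP => [_ | []]; last by exists P.
exact: bigmin_leq.
Qed.

Lemma borsuk_SomeP F f : borsuk F = Some f ->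
  exists2 P, borsuk_partition F P & #|P| <= f.
Proof.
rewrite /borsuk; case: existsP => // -[P0 bP0] [<-].
elim/big_ind: _ => [| x y [P1 ? ?] [P2 ? ?] | P bP]; last by exists P.
- exists P0 => //; case/andP: bP0 => partP0 _.
  rewrite (card_partition partP0) -sum1_card; apply: leq_sum => A AP0.
  rewrite card_gt0; case/and3P: partP0 => _ _.
  by apply: contraNneq => <-.
- by case: (leqP x y) => _; [exists P1 | exists P2].
Qed.

Lemma borsuk_le_labelling (L : finType) F (lab : {set T} -> L) (Ls : {set L}) :
  (forall X, X \in F -> lab X \in Ls) ->
  (forall X Y, X \in F -> Y \in F -> lab X = lab Y -> dist X Y < diam F) ->
  ole (borsuk F) (Some #|Ls|).
Proof.
move=> labF labD; pose P := preim_partition lab F.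
have bP : borsuk_partition F P.
  rewrite /borsuk_partition preim_partitionP; apply/forall_inP => A.
  case/imsetP => X XF ->; apply: diam_lt => [|Y Z].
    by apply: leq_ltn_trans (labD X X XF XF erefl).
  rewrite !inE => /andP [YF /eqP eY] /andP [ZF /eqP eZ].
  by apply: labD; rewrite // -eY -eZ.
apply: ole_trans_Some (borsuk_le_partition bP) _.
apply: leq_trans (leq_imset_card (fun l => [set Y in F | l == lab Y]) Ls).
apply: subset_leq_card; apply/subsetP => A /imsetP [X XF ->].
by apply/imsetP; exists (lab X); rewrite ?labF.
Qed.

Lemma ole_borsuk x F : (forall P, borsuk_partition F P -> ole x (Some #|P|)) ->
  ole x (borsuk F).
Proof.
case eF: (borsuk F) => [f|] le_x; last by case: x {le_x}.
by have [P bP le_Pf] := borsuk_SomeP eF; apply: ole_trans_Some (le_x P bP) le_Pf.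
Qed.

Lemma ole_oadd_borsuk x F F' :
  (forall P P', borsuk_partition F P -> borsuk_partition F' P' ->
     ole x (Some (#|P| + #|P'|))) ->
  ole x (oadd (borsuk F) (borsuk F')).
Proof.
case eF: (borsuk F) => [f|]; case eF': (borsuk F') => [f'|] le_x; try by case: x {le_x}.
have [P bP le_Pf] := borsuk_SomeP eF; have [P' bP' le_Pf'] := borsuk_SomeP eF'.
exact: ole_trans_Some (le_x P P' bP bP') (leq_add le_Pf le_Pf').
Qed.

Lemma ole_omin x a b : ole x a -> ole x b -> ole x (omin a b).
Proof.
by case: a b => [f|] [f'|] //; case: x => //= k; rewrite leq_min => -> ->.
Qed.

End BorsukNumber.

Section Matroid.
Variables (T : finType) (E : {set T}) (BM : {set {set T}}).
Hypothesis matroidM : is_matroid E BM.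

Lemma matroid_base_sub B : B \in BM -> B \subset E.
Proof. by case/and3P: matroidM => _ /forall_inP subE _ /subE. Qed.

Lemma matroid_exchange B1 B2 x : B1 \in BM -> B2 \in BM -> x \in B1 :\: B2 ->
  exists2 y, y \in B2 :\: B1 & y |: (B1 :\ x) \in BM.
Proof.
move=> B1M B2M xD; case/and3P: matroidM => _ _ /forall_inP /(_ B1 B1M).
by move=> /forall_inP /(_ B2 B2M) /forall_inP /(_ x xD) /exists_inP.
Qed.

Lemma matroid_base_card_le B1 B2 : B1 \in BM -> B2 \in BM -> #|B1| <= #|B2|.
Proof.
elim: {B1}#|B1 :\: B2| {-2}B1 (erefl #|B1 :\: B2|) => [|n IH] B1 cardD B1M B2M.
  by apply: subset_leq_card; rewrite -setD_eq0 -cards_eq0 cardD.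
have [x xD] : exists x, x \in B1 :\: B2 by apply/set0Pn; rewrite -card_gt0 cardD.
have [y yD yB1xM] := matroid_exchange B1M B2M xD.
move: xD yD; rewrite !inE => /andP [xB2 xB1] /andP [yB1 yB2].
have <- : #|y |: (B1 :\ x)| = #|B1|.
  by rewrite cardsU1 (cardsD1 x B1) xB1 !inE (negbTE yB1) andbF.
apply: IH => //; move: cardD; rewrite (cardsD1 x) !inE xB2 xB1 add1n => -[<-].
apply: eq_card => z; rewrite !inE.
case: (z =P y) => [->|_] /=; first by rewrite yB2 (negbTE yB1) !andbF.
by case: (z \in B2); case: (z != x).
Qed.

Lemma matroid_base_card B1 B2 : B1 \in BM -> B2 \in BM -> #|B1| = #|B2|.
Proof. by move=> B1M B2M; apply/eqP; rewrite eqn_leq !matroid_base_card_le. Qed.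

Lemma diam_disjoint_bases B1 B2 : B1 \in BM -> B2 \in BM -> [disjoint B1 & B2] ->
  diam BM = dist B1 B2.
Proof.
move=> B1M B2M dB; apply/eqP; rewrite eqn_leq dist_le_diam // andbT.
apply/bigmax_leqP => B BM_B; apply/bigmax_leqP => C CM.
rewrite (dist_disjoint dB) (matroid_base_card B1M BM_B) (matroid_base_card B2M CM).
exact: dist_le_card.
Qed.

End Matroid.

Lemma Ser_basesC (T : finType) (BM BM' : {set {set T}}) :
  Ser_bases BM BM' = Ser_bases BM' BM.
Proof.
apply/setP=> X; rewrite !inE; apply/exists_inP/exists_inP.
all: case=> B BMB /exists_inP [B' BMB' /andP [dB /eqP ->]]; exists B' => //.
all: by apply/exists_inP; exists B => //; rewrite disjoint_sym dB setUC eqxx.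
Qed.

Section SeriesDiameter.
Variables (T : finType) (E E' : {set T}) (BM BM' : {set {set T}}) (p : T).
Hypotheses (matroidM : is_matroid E BM) (matroidM' : is_matroid E' BM').
Hypothesis EE' : E :&: E' = [set p].

Lemma disjoint_avoid (A A' : {set T}) : A \subset E -> A' \subset E' -> p \notin A ->
  [disjoint A & A'].
Proof.
move=> /subsetP AE /subsetP AE' pA; apply/pred0P => x /=; apply/negbTE/andP.
case=> xA xA'; suff /set1P px : x \in [set p] by rewrite -px xA in pA.
by rewrite -EE' inE AE ?AE'.
Qed.

Lemma dist_add_le_diam_Ser B C B' C' :
  B \in BM -> C \in BM -> B' \in BM' -> C' \in BM' -> p \notin B -> p \notin C ->
  dist B C + dist B' C' <= diam (Ser_bases BM BM').
Proof.
move=> BMB BMC BMB' BMC' pB pC.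
have dis : [disjoint B :|: C & B' :|: C'].
  apply: disjoint_avoid; last by rewrite inE negb_or pB.
    by rewrite subUset !(matroid_base_sub matroidM).
  by rewrite subUset !(matroid_base_sub matroidM').
have in_Ser A A' : A \in BM -> A' \in BM' -> A \subset B :|: C ->
    A' \subset B' :|: C' -> A :|: A' \in Ser_bases BM BM'.
  move=> BMA BMA' sA sA'; rewrite inE; apply/exists_inP; exists A => //.
  by apply/exists_inP; exists A' => //; rewrite eqxx (disjointWl sA (disjointWr sA' dis)).
rewrite -dist_setU_disjoint //; apply: dist_le_diam; apply: in_Ser.
all: by rewrite // subsetUl || rewrite subsetUr.
Qed.

Lemma dist_add_diam_le_diam_Ser B C : B \in BM -> C \in BM -> p \notin B -> p \notin C ->
  dist B C + diam BM' <= diam (Ser_bases BM BM').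
Proof.
move=> BMB BMC pB pC; apply: addn_diam_le => [|B' C' BMB' BMC'].
  by case/and3P: matroidM'.
exact: dist_add_le_diam_Ser.
Qed.

End SeriesDiameter.

Lemma diam_add_dist_le_diam_Ser (T : finType) (E E' : {set T}) (BM BM' : {set {set T}})
    (p : T) B' C' :
  is_matroid E BM -> is_matroid E' BM' -> E :&: E' = [set p] ->
  B' \in BM' -> C' \in BM' -> p \notin B' -> p \notin C' ->
  diam BM + dist B' C' <= diam (Ser_bases BM BM').
Proof.
move=> matroidM matroidM' EE' BMB' BMC' pB' pC'; rewrite addnC Ser_basesC.
have E'E : E' :&: E = [set p] by rewrite setIC.
exact: (dist_add_diam_le_diam_Ser matroidM' matroidM E'E).
Qed.

Section SeriesBorsuk.
Variables (T : finType) (E E' : {set T}) (BM BM' : {set {set T}}) (p : T).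
Hypotheses (matroidM : is_matroid E BM) (matroidM' : is_matroid E' BM').
Hypothesis EE' : E :&: E' = [set p].

Local Notation S := (Ser_bases BM BM').

Definition ser_split (X : {set T}) : {set T} * {set T} :=
  odflt (set0, set0) [pick BB | [&& BB.1 \in BM, BB.2 \in BM',
                                   [disjoint BB.1 & BB.2] & X == BB.1 :|: BB.2]].

Lemma ser_splitP X : X \in S ->
  [/\ (ser_split X).1 \in BM, (ser_split X).2 \in BM',
      [disjoint (ser_split X).1 & (ser_split X).2] &
      X = (ser_split X).1 :|: (ser_split X).2].
Proof.
rewrite inE /ser_split => /exists_inP [B BMB /exists_inP [B' BMB' /andP [dB /eqP eX]]].
case: pickP => [[C C'] /and4P [? ? ? /eqP] | /(_ (B, B'))] //=.
by rewrite BMB BMB' dB eX eqxx.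
Qed.

Lemma dist_le_ser_split X Y : X \in S -> Y \in S ->
  dist X Y <= dist (ser_split X).1 (ser_split Y).1 + dist (ser_split X).2 (ser_split Y).2.
Proof.
move=> /ser_splitP [_ _ _ eX] /ser_splitP [_ _ _ eY].
by rewrite {1}eX {1}eY; apply: dist_setU_le.
Qed.

Lemma ser_split_avoid X : X \in S -> p \in (ser_split X).2 -> p \notin (ser_split X).1.
Proof.
by case/ser_splitP=> _ _ /pred0P /(_ p) /= dX _ pX2; apply/negP => pX1; rewrite pX1 pX2 in dX.
Qed.

Lemma borsuk_Ser_le_add P P' : borsuk_partition BM P -> borsuk_partition BM' P' ->
  ole (borsuk S) (Some (#|P| + #|P'|)).
Proof.
move=> bP bP'.
pose lab X := if p \in (ser_split X).2 then inr (pblock P' (ser_split X).2)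
              else inl (pblock P (ser_split X).1).
pose Ls := [set inl A | A in P] :|: [set inr A' | A' in P'].
apply: ole_trans_Some (@borsuk_le_labelling _ _ _ lab Ls _ _) _.
- move=> X XS; have [X1M X2M _ _] := ser_splitP XS; rewrite /lab !inE.
  case: ifP => _; apply/orP; [right | left]; apply: imset_f.
    exact: borsuk_partition_pblock bP' X2M.
  exact: borsuk_partition_pblock bP X1M.
- move=> X Y XS YS; have [X1M X2M _ _] := ser_splitP XS.
  have [Y1M Y2M _ _] := ser_splitP YS; rewrite /lab.
  case pX: (p \in _); case pY: (p \in _) => // -[same];
    apply: leq_ltn_trans (dist_le_ser_split XS YS) _.
    have pX1 := ser_split_avoid XS pX; have pY1 := ser_split_avoid YS pY.
    apply: leq_trans (dist_add_diam_le_diam_Ser matroidM matroidM' EE' X1M Y1M pX1 pY1).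
    by rewrite ltn_add2l (borsuk_partition_dist bP' X2M Y2M same).
  have := diam_add_dist_le_diam_Ser matroidM matroidM' EE' X2M Y2M (negbT pX) (negbT pY).
  by apply: leq_trans; rewrite ltn_add2r (borsuk_partition_dist bP X1M Y1M same).
- apply: leq_trans (leq_card_setU _ _) _.
  by apply: leq_add; apply: leq_imset_card.
Qed.

Section DisjointBasesAvoidingP.
Variables B1 B2 : {set T}.
Hypotheses (B1M : B1 \in BM) (B2M : B2 \in BM) (dB : [disjoint B1 & B2]).
Hypotheses (pB1 : p \notin B1) (pB2 : p \notin B2).

Lemma borsuk_Ser_le_l P : borsuk_partition BM P -> ole (borsuk S) (Some #|P|).
Proof.
move=> bP; apply: (@borsuk_le_labelling _ _ _ (fun X => pblock P (ser_split X).1)).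
  by move=> X /ser_splitP [X1M _ _ _]; apply: borsuk_partition_pblock bP X1M.
move=> X Y XS YS same; have [X1M X2M _ _] := ser_splitP XS.
have [Y1M Y2M _ _] := ser_splitP YS; apply: leq_ltn_trans (dist_le_ser_split XS YS) _.
have := dist_add_le_diam_Ser matroidM matroidM' EE' B1M B2M X2M Y2M pB1 pB2.
apply: leq_trans; rewrite ltn_add2r -(diam_disjoint_bases matroidM B1M B2M dB).
exact: borsuk_partition_dist bP X1M Y1M same.
Qed.

Lemma borsuk_Ser_le_r P' : borsuk_partition BM' P' -> ole (borsuk S) (Some #|P'|).
Proof.
move=> bP'; apply: (@borsuk_le_labelling _ _ _ (fun X => pblock P' (ser_split X).2)).
  by move=> X /ser_splitP [_ X2M _ _]; apply: borsuk_partition_pblock bP' X2M.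
move=> X Y XS YS same; have [X1M X2M _ _] := ser_splitP XS.
have [Y1M Y2M _ _] := ser_splitP YS; apply: leq_ltn_trans (dist_le_ser_split XS YS) _.
have := dist_add_diam_le_diam_Ser matroidM matroidM' EE' B1M B2M pB1 pB2.
apply: leq_trans; rewrite -(diam_disjoint_bases matroidM B1M B2M dB).
apply: leq_ltn_trans (leq_add (dist_le_diam X1M Y1M) (leqnn _)) _.
by rewrite ltn_add2l (borsuk_partition_dist bP' X2M Y2M same).
Qed.

End DisjointBasesAvoidingP.

End SeriesBorsuk.

Theorem proposition4p4 (T : finType) (E E' : {set T})
    (BM BM' : {set {set T}}) (p : T) :
  is_matroid E BM -> is_matroid E' BM' ->
  E :&: E' = [set p] ->
  ~~ coloop BM p -> ~~ coloop BM' p ->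
  ole (borsuk (Ser_bases BM BM')) (oadd (borsuk BM) (borsuk BM')) /\
  ((exists B1, exists B2,
      [/\ B1 \in BM, B2 \in BM, [disjoint B1 & B2], p \notin B1 & p \notin B2]) ->
   ole (borsuk (Ser_bases BM BM')) (omin (borsuk BM) (borsuk BM'))).
Proof.
move=> matroidM matroidM' EE' _ _; split.
  exact: ole_oadd_borsuk (borsuk_Ser_le_add matroidM matroidM' EE').
case=> B1 [B2 [B1M B2M dB pB1 pB2]]; apply: ole_omin; apply: ole_borsuk.
  exact: (borsuk_Ser_le_l matroidM matroidM' EE' B1M B2M dB pB1 pB2).
exact: (borsuk_Ser_le_r matroidM matroidM' EE' B1M B2M dB pB1 pB2).
Qed.
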